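(* Let $G$ be a tree with at least $2$ vertices. Then a minimum connecting transition set of $G$ has size exactly $|V(G)|-2$.
   Context: All graphs are finite, simple and undirected. A transition of a graph $G$ is an unordered pair $\{ab,bc\}$ of two distinct edges of $G$ sharing the vertex $b$ (so $a\neq c$); it is written $abc$. A walk in $G$ is a sequence $(v_1,\dots,v_k)$ of vertices with $v_iv_{i+1}\in E(G)$ for all $i\le k-1$; it leads from $v_1$ to $v_k$. For a set $T$ of transitions of $G$, a walk $(v_1,\dots,v_k)$ is $T$-compatible if for every $i\in[1,k-2]$, either $v_i=v_{i+2}$ or $v_iv_{i+1}v_{i+2}\in T$. The graph $G$ is $T$-connected, and $T$ is a connecting transition set of $G$, if for all vertices $u,v$ of $G$ there is a $T$-compatible walk leading from $u$ to $v$. A minimum connecting transition set is a connecting transition set of minimum cardinality. *)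

From mathcomp Require Import all_boot.
Set Implicit Arguments. Unset Strict Implicit. Unset Printing Implicit Defensive.

(* A finite simple graph is given by a vertex type T : finType and a
   symmetric irreflexive adjacency relation e : rel T. *)

Section Graphs.
Variable T : finType.
Variable e : rel T.

Definition edge_of (a b : T) : {set T} := [set a; b].

Definition trans (a b c : T) : {set {set T}} := [set edge_of a b; edge_of b c].

Definition is_transition (t : {set {set T}}) : bool :=
  [exists a, exists b, exists c,
     [&& e a b, e b c, a != c & t == trans a b c]].

Fixpoint compatible (Tr : {set {set {set T}}}) (s : seq T) : bool :=
  match s with
  | a :: ((b :: c :: _) as s') =>
      ((a == c) || (trans a b c \in Tr)) && compatible Tr s'
  | _ => true
  end.

Definition connecting (Tr : {set {set {set T}}}) : Prop :=
  (forall t, t \in Tr -> is_transition t) /\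
  forall u v : T, exists p : seq T,
    [&& path e u p, last u p == v & compatible Tr (u :: p)].

Definition min_connecting (Tr : {set {set {set T}}}) : Prop :=
  connecting Tr /\ forall Tr', connecting Tr' -> #|Tr| <= #|Tr'|.

Definition gconnected : Prop := forall x y : T, connect e x y.

Definition acyclic : Prop :=
  ~ exists (x : T) (p : seq T),
      [&& 2 <= size p, uniq (x :: p), path e x p & e (last x p) x].

Definition is_tree : Prop := gconnected /\ acyclic.

End Graphs.

From mathcomp Require Import all_boot.
Set Implicit Arguments. Unset Strict Implicit. Unset Printing Implicit Defensive.

(* Lower bound: every edge of a tree is a bridge, so for any two edges there are
   endpoints such that every walk between them crosses both; hence a connecting
   transition set makes the edges connected when two edges are adjacent iff they
   form a transition of the set. A connected graph has at most one vertex more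
   than edges, so |V| <= |E| + 1 <= |Tr| + 2.
   Upper bound: fix a breadth-first tree with root rho and a child c0 of rho, and
   for every other vertex w take the transition (grandparent of w, parent of w, w),
   the grandparent being c0 when the parent is rho. Every vertex can then climb
   to the arc rho -> c0, and any two vertices are joined by going up from the
   first, turning at the root and coming down to the second. *)

Section Distance.

Variables (V : finType) (r : rel V) (s0 : V).

Fixpoint ball k : {set V} :=
  if k is k'.+1 then ball k' :|: [set z | [exists y in ball k', r y z]]
  else [set s0].

Lemma ball_last p y k :
  path r y p -> y \in ball k -> last y p \in ball (k + size p).
Proof.
elim: p y k => [|z p IHp] y k /=; first by rewrite addn0.
case/andP=> ryz rp yk; rewrite addnS -addSn; apply: IHp => //=.
by rewrite !inE; apply/orP; right; apply/existsP; exists y; rewrite yk.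
Qed.

Lemma connect_ball x : connect r s0 x -> exists2 k, k < #|V| & x \in ball k.
Proof.
case/connectP=> p rp ->; case: (shortenP rp) => q rq uq _.
exists (size q); last by rewrite -[size q]add0n ball_last ?set11.
by rewrite -ltnS -[(size q).+1]/(size (s0 :: q)) -(card_uniqP uq) ltnS max_card.
Qed.

Definition dist x := find (fun k => x \in ball k) (iota 0 #|V|).

Lemma dist_le x k : k < #|V| -> x \in ball k -> dist x <= k.
Proof.
move=> kV xk; rewrite leqNgt; apply/negP=> /(before_find 0).
by rewrite nth_iota // xk.
Qed.

Lemma dist_pred x :
  connect r s0 x -> x != s0 -> exists2 y, r y x & dist y < dist x.
Proof.
case/connect_ball=> k kV xk xs0.
have has_x : has (fun k => x \in ball k) (iota 0 #|V|).
  by apply/hasP; exists k; rewrite ?mem_iota.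
have dV : dist x < #|V| by rewrite -[#|V|](size_iota 0) -has_find.
have := nth_find 0 has_x; rewrite -/(dist x) nth_iota // add0n.
case Ed: (dist x) dV => [|m] dV; first by rewrite inE (negbTE xs0).
have xm : x \in ball m = false.
  have /(before_find 0) : m < dist x by rewrite Ed.
  by rewrite nth_iota ?add0n // ltnW.
rewrite /= inE xm inE => /existsP[y /andP[ym ryx]].
by exists y; rewrite // ltnS dist_le // ltnW.
Qed.

Definition parent x := odflt x [pick y | r y x && (dist y < dist x)].

Lemma parentP x :
  connect r s0 x -> x != s0 -> r (parent x) x && (dist (parent x) < dist x).
Proof.
move=> s0x xs0; have [y ryx dyx] := dist_pred s0x xs0.
by rewrite /parent; case: pickP => [//|/(_ y)]; rewrite ryx dyx.
Qed.

End Distance.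

Definition adj_in (V : finType) (F : {set {set V}}) : rel V :=
  fun a b => [set a; b] \in F.

Lemma adj_in_sym (V : finType) (F : {set {set V}}) : symmetric (adj_in F).
Proof. by move=> a b; rewrite /adj_in setUC. Qed.

Lemma card_connected_leq (V : finType) (F : {set {set V}}) (S : {set V}) s0 :
  s0 \in S -> {in S, forall x, connect (adj_in F) s0 x} -> #|S| <= #|F| + 1.
Proof.
move=> s0S S_conn; set par := parent (adj_in F) s0.
have parP x : x \in S :\ s0 ->
    adj_in F (par x) x && (dist (adj_in F) s0 (par x) < dist (adj_in F) s0 x).
  by rewrite !inE => /andP[xs0 xS]; apply: parentP; rewrite ?S_conn.
pose up x := [set par x; x].
(* two vertices cannot be each other's parent, since the distance decreases *)
have up_inj : {in S :\ s0 &, injective up}.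
  move=> x y xS yS.
  have /andP[_ dx] := parP x xS; have /andP[_ dy] := parP y yS.
  move=> upxy; case: (eqVneq x y) => // /negPf x_neq_y.
  have : x \in up y by rewrite -upxy !inE eqxx orbT.
  have : y \in up x by rewrite upxy !inE eqxx orbT.
  rewrite !inE [y == x]eq_sym x_neq_y !orbF => /eqP y_par /eqP x_par.
  by move: dx dy; rewrite -y_par -x_par => dyx /(ltn_trans dyx); rewrite ltnn.
have upF : up @: (S :\ s0) \subset F.
  by apply/subsetP=> _ /imsetP[x xS ->]; case/andP: (parP x xS).
rewrite (cardsD1 s0 S) s0S addnC leq_add2r -(card_in_imset up_inj).
exact: subset_leq_card.
Qed.

Lemma edge_ofC (T : finType) (a b : T) : edge_of a b = edge_of b a.
Proof. by rewrite /edge_of setUC. Qed.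

Lemma transC (T : finType) (a b c : T) : trans a b c = trans c b a.
Proof. by rewrite /trans setUC (edge_ofC a b) (edge_ofC b c). Qed.

Section Bridges.

Variables (T : finType) (e : rel T).
Hypotheses (e_sym : symmetric e) (e_irr : irreflexive e).

Definition edges : {set {set T}} := [set edge_of ab.1 ab.2 | ab : T * T & e ab.1 ab.2].

Lemma edge_in_edges a b : e a b -> edge_of a b \in edges.
Proof. by move=> eab; apply/imsetP; exists (a, b); rewrite ?inE. Qed.

Definition avoid (f : {set T}) : rel T := fun x y => e x y && (edge_of x y != f).

Lemma connect_avoid_edge f a x y : e x y -> edge_of x y != f ->
  connect (avoid f) a x = connect (avoid f) a y.
Proof.
move=> exy xyf; have fxy : avoid f x y by rewrite /avoid exy xyf.
have fyx : avoid f y x by rewrite /avoid e_sym edge_ofC exy xyf.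
by apply/idP/idP=> /connect_trans; apply; apply: connect1.
Qed.

Fixpoint uses (f : {set T}) (s : seq T) : bool :=
  if s is x :: ((y :: _) as s') then (edge_of x y == f) || uses f s' else false.

Lemma path_uses f (side : pred T) :
    (forall x y, e x y -> edge_of x y != f -> side x = side y) ->
  forall p u, path e u p -> side u != side (last u p) -> uses f (u :: p).
Proof.
move=> side_edge; elim=> [|y p IHp] u /=; first by rewrite eqxx.
case/andP=> euy ep side_ne; case: eqP => //= /eqP uyf.
by apply: IHp; rewrite -?(side_edge _ _ euy uyf).
Qed.

Lemma compatible_uses_connect (Tr : {set {set {set T}}}) s x y g :
  compatible Tr (x :: y :: s) -> uses g (x :: y :: s) ->
  connect (adj_in Tr) (edge_of x y) g.
Proof.
elim: s x y => [|z s IHs] x y /=; first by rewrite orbF => _ /eqP ->.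
case/andP=> xyz cs /orP[/eqP <- //|us].
apply: connect_trans (IHs _ _ cs us).
by case/orP: xyz => [/eqP ->|xyz]; [rewrite edge_ofC | apply: connect1].
Qed.

Hypothesis e_acyclic : acyclic e.

Lemma avoid_bridge a b : e a b -> ~~ connect (avoid (edge_of a b)) a b.
Proof.
move=> eab; apply/negP=> /connectP[p ap lastp].
case: (shortenP ap) lastp => q aq uq _ lastq.
case: q aq uq lastq => [|z [|w q]] aq uq /= lastq.
- by move: eab; rewrite lastq e_irr.
- by move: aq; rewrite /= -lastq /avoid eqxx !andbF.
- apply: e_acyclic; exists a, [:: z, w & q]; apply/and4P; split=> //.
    by apply: sub_path aq => u v /andP[].
  by rewrite /= -lastq e_sym.
Qed.

Lemma walk_uses_both a b c d : e a b -> e c d -> edge_of a b != edge_of c d ->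
  exists u v, forall p, path e u p -> last u p = v ->
    uses (edge_of a b) (u :: p) && uses (edge_of c d) (u :: p).
Proof.
move=> eab ecd abcd; set f := edge_of a b in abcd *; set g := edge_of c d in abcd *.
set sf := connect (avoid f) a; set sg := connect (avoid g) c.
have sf_edge x y : e x y -> edge_of x y != f -> sf x = sf y.
  exact: connect_avoid_edge.
have sg_edge x y : e x y -> edge_of x y != g -> sg x = sg y.
  exact: connect_avoid_edge.
have sf_a : sf a by exact: connect0.
have sg_c : sg c by exact: connect0.
have sf_b : sf b = false by apply/negbTE/avoid_bridge.
have sg_d : sg d = false by apply/negbTE/avoid_bridge.
have sf_cd : sf c = sf d by apply: sf_edge; rewrite // eq_sym.
have sg_ab : sg a = sg b by apply: sg_edge.
(* u is the end of f away from g, v the end of g away from f *)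
exists (if sf c then b else a), (if sg a then d else c) => p ep lastp.
apply/andP; split; [apply: (path_uses sf_edge ep) | apply: (path_uses sg_edge ep)].
- rewrite lastp (_ : sf (if sg a then d else c) = sf c); last by case: (sg a).
  by case: (sf c); rewrite ?sf_a ?sf_b.
- rewrite lastp (_ : sg (if sf c then b else a) = sg a); last by case: (sf c).
  by case: (sg a); rewrite ?sg_c ?sg_d.
Qed.

Lemma connecting_edges_connected Tr :
  connecting e Tr -> {in edges &, forall f g, connect (adj_in Tr) f g}.
Proof.
case=> _ Tr_conn _ _ /imsetP[[a b] /[!inE] /= eab ->] /imsetP[[c d] /[!inE] /= ecd ->].
have [-> | abcd] := eqVneq (edge_of a b) (edge_of c d); first exact: connect0.
have [u [v uses_uv]] := walk_uses_both eab ecd abcd.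
have [[|y p] /and3P[ep /eqP lastp compat]] := Tr_conn u v.
  by have /andP[] := uses_uv [::] ep lastp.
have /andP[uses_ab uses_cd] := uses_uv _ ep lastp.
apply: connect_trans (compatible_uses_connect compat uses_cd).
by rewrite (sym_connect_sym (adj_in_sym Tr)) (compatible_uses_connect compat uses_ab).
Qed.

Lemma card_edges_leq_connecting Tr : connecting e Tr -> #|edges| <= #|Tr| + 1.
Proof.
move=> Tr_conn; have [->|[f fE]] := set_0Vmem edges; first by rewrite cards0.
by apply: (card_connected_leq fE) => g gE; apply: (connecting_edges_connected Tr_conn).
Qed.

End Bridges.

Lemma connected_card_leq_edges (T : finType) (e : rel T) :
  gconnected e -> #|T| <= #|edges e| + 1.
Proof.
move=> e_conn; have [-> // | /card_gt0P[x _]] := posnP #|T|.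
rewrite -cardsT; apply: (card_connected_leq (in_setT x)) => y _.
by apply: connect_sub (e_conn x y) => a b eab; apply/connect1/edge_in_edges.
Qed.

Section Arcs.

Variables (T : finType) (e : rel T) (Tr : {set {set {set T}}}).
Hypothesis e_sym : symmetric e.

Definition arc_step : rel (T * T) := fun A B =>
  [&& e A.1 A.2, A.2 == B.1, e B.1 B.2 & (A.1 == B.2) || (trans A.1 A.2 B.2 \in Tr)].

Lemma arc_path_walk s (A : T * T) : e A.1 A.2 -> path arc_step A s ->
  [&& path e A.1 (A.2 :: map snd s), last A.2 (map snd s) == (last A s).2
    & compatible Tr (A.1 :: A.2 :: map snd s)].
Proof.
elim: s A => [|[b1 b2] s IHs] [a1 a2] /= eA; first by rewrite eA eqxx.
case/andP=> /and4P[_ /eqP /= a2b1 eB turn] As; subst b1.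
have /and3P[/= eB_s last_s compat_s] := IHs (a2, b2) eB As.
by rewrite /= eA eB_s last_s turn compat_s.
Qed.

Lemma arc_step_back (A : T * T) : e A.1 A.2 -> arc_step A (A.2, A.1).
Proof. by move=> eA; rewrite /arc_step !eqxx eA /= e_sym eA. Qed.

Lemma connect_arc_rev (A B : T * T) :
  connect arc_step A B -> connect arc_step (B.2, B.1) (A.2, A.1).
Proof.
case/connectP=> s As ->; elim: s A As => [|C s IHs] A /=; first by rewrite connect0.
case/andP=> /and4P[eA /eqP AC eC turn] Cs.
apply: connect_trans (IHs _ Cs) (connect1 _).
rewrite -AC in eC turn *.
by rewrite /arc_step /= eqxx (e_sym C.2) eC (e_sym A.2) eA eq_sym transC.
Qed.

(* Go from u up to the hub arc, turn back along it, and retrace v's way up in reverse. *)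
Lemma connecting_of_hub (A0 : T * T) :
    e A0.1 A0.2 -> (forall u, exists2 b, e u b & connect arc_step (u, b) A0) ->
  forall u v, exists p, [&& path e u p, last u p == v & compatible Tr (u :: p)].
Proof.
move=> eA0 hub u v; have [bu eu u_A0] := hub u; have [bv _ v_A0] := hub v.
have /connectP[s us lasts] : connect arc_step (u, bu) (bv, v).
  apply: connect_trans u_A0 (connect_trans (connect1 (arc_step_back eA0)) _).
  exact: (connect_arc_rev v_A0).
exists (bu :: map snd s).
by have := @arc_path_walk s (u, bu) eu us; rewrite -lasts.
Qed.

End Arcs.

Section RootedTransitions.

Variables (T : finType) (e : rel T) (rho c0 : T).
Hypotheses (e_sym : symmetric e) (e_conn : gconnected e).
Hypotheses (c0_rho : c0 != rho) (par_c0 : parent e rho c0 = rho).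

Local Notation par := (parent e rho).
Local Notation d := (dist e rho).

Lemma parP w : w != rho -> e (par w) w && (d (par w) < d w).
Proof. exact: parentP (e_conn rho w). Qed.

Lemma e_rho_c0 : e rho c0.
Proof. by have /andP[] := parP c0_rho; rewrite par_c0. Qed.

Definition up_arc b : T * T := (b, if b == rho then c0 else par b).

Lemma up_arc_edge b : e (up_arc b).1 (up_arc b).2.
Proof.
rewrite /=; case: eqVneq => [->|b_rho]; first exact: e_rho_c0.
by rewrite e_sym; case/andP: (parP b_rho).
Qed.

Definition rooted_transitions : {set {set {set T}}} :=
  [set trans (up_arc (par w)).2 (par w) w | w in ~: [set rho; c0]].

Lemma card_rooted_transitions : #|rooted_transitions| <= #|T| - 2.
Proof.
apply: leq_trans (leq_imset_card _ _) _.
by rewrite -(cardsC [set rho; c0]) cards2 eq_sym c0_rho addKn.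
Qed.

Lemma rooted_transitionsP t : t \in rooted_transitions -> is_transition e t.
Proof.
case/imsetP=> w; rewrite !inE negb_or => /andP[w_rho w_c0] ->.
have /andP[e_par_w d_par_w] := parP w_rho.
apply/existsP; exists (up_arc (par w)).2; apply/existsP; exists (par w).
apply/existsP; exists w; rewrite eqxx e_par_w andbT.
rewrite e_sym (up_arc_edge (par w)) /=; case: ifPn => [_ | par_rho].
  by rewrite eq_sym.
have /andP[_ d_par2_w] := parP par_rho; apply/eqP=> par2_w.
by move: (ltn_trans d_par2_w d_par_w); rewrite par2_w ltnn.
Qed.

Lemma up_arc_to_root w :
  connect (arc_step e rooted_transitions) (up_arc w) (up_arc rho).
Proof.
have [n dw] := ubnP (d w); elim: n w dw => // n IHn w dw.
case: (eqVneq w rho) => [-> | w_rho]; first exact: connect0.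
case: (eqVneq w c0) => [-> | w_c0].
  apply: connect1; have := arc_step_back rooted_transitions e_sym (up_arc_edge c0).
  by rewrite /up_arc /= (negbTE c0_rho) par_c0 eqxx.
have /andP[e_par_w d_par_w] := parP w_rho.
apply: connect_trans (connect1 _) (IHn (par w) (leq_trans d_par_w dw)).
rewrite /arc_step /up_arc /= (negbTE w_rho) eqxx e_sym e_par_w.
rewrite (up_arc_edge (par w)) /=.
apply/orP; right; rewrite transC; apply/imsetP; exists w => //.
by rewrite !inE negb_or w_rho w_c0.
Qed.

Lemma rooted_transitions_connecting : connecting e rooted_transitions.
Proof.
split; first exact: rooted_transitionsP.
apply: (connecting_of_hub e_sym (up_arc_edge rho)) => u.
by exists (up_arc u).2; [apply: up_arc_edge | apply: up_arc_to_root].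
Qed.

End RootedTransitions.

Lemma tree_card_leq_connecting (T : finType) (e : rel T) Tr :
    symmetric e -> irreflexive e -> is_tree e -> connecting e Tr ->
  #|T| <= #|Tr| + 2.
Proof.
move=> e_sym e_irr [e_conn e_acyclic] Tr_conn.
apply: leq_trans (connected_card_leq_edges e_conn) _.
by rewrite -[2]/(1 + 1) addnA leq_add2r card_edges_leq_connecting.
Qed.

Lemma exists_connecting_card_leq (T : finType) (e : rel T) :
    symmetric e -> gconnected e -> 2 <= #|T| ->
  exists2 Tr, connecting e Tr & #|Tr| <= #|T| - 2.
Proof.
move=> e_sym e_conn /card_gt1P[rho [y [_ _ rho_y]]].
have y_rho : y != rho by rewrite eq_sym.
(* a non-root vertex closest to the root is a child of the root *)
case: (arg_minnP (P := predC1 rho) (dist e rho) y_rho) => c0 c0_rho c0_min.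
have par_c0 : parent e rho c0 = rho.
  apply/eqP; apply: contraT => par_rho; have := c0_min _ par_rho.
  by rewrite leqNgt; case/andP: (parentP (e_conn rho c0) c0_rho) => _ ->.
exists (rooted_transitions e rho c0).
  exact: rooted_transitions_connecting.
exact: card_rooted_transitions.
Qed.

Theorem lemma1 (T : finType) (e : rel T)
  (e_sym : symmetric e) (e_irr : irreflexive e)
  (tree : is_tree e) (two : 2 <= #|T|)
  (Tr : {set {set {set T}}}) (hmin : min_connecting e Tr) :
  #|Tr| = #|T| - 2.
Proof.
case: hmin => Tr_conn Tr_min.
have [Tr0 Tr0_conn Tr0_card] := exists_connecting_card_leq e_sym tree.1 two.
apply/eqP; rewrite eqn_leq (leq_trans (Tr_min _ Tr0_conn) Tr0_card) /=.
by rewrite leq_subLR addnC (tree_card_leq_connecting e_sym e_irr tree Tr_conn).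
Qed.
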